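(* Let $n,k\ge 1$ and let $\mathfrak{a}\in\mathcal{A}_n^k$ be such that $\mathrm{Der}_k(\mathfrak{a})$ is nonempty. Then: 1) $t_1(\mathfrak{a})=t_2(\mathfrak{a})$, and, listing the slots of type I or type II in increasing order of their index, their types alternate, beginning with a slot of type I; 2) $\mathrm{des}(\mathfrak{a})=\mathrm{des}(\mathrm{Der}_k(\mathfrak{a}))+t_1^{+}(\mathfrak{a})+t_3^{+}(\mathfrak{a})$ and $\mathrm{dez}(\mathfrak{a})=\mathrm{des}(\mathrm{Der}_k(\mathfrak{a}))+t_2^{+}(\mathfrak{a})+t_3^{+}(\mathfrak{a})$.
   Context: $\mathfrak{S}_n$ is the set of permutations of $[n]=\{1,\dots,n\}$; $\mathrm{FIX}(\pi)=\{i:\pi(i)=i\}$. For $k\ge1$, a $k$-arrangement of $[n]$ is a pair $\mathfrak{a}=(\pi,\phi)$ with $\pi\in\mathfrak{S}_n$ and $\phi:\mathrm{FIX}(\pi)\to\{-1,\dots,-k\}$ arbitrary; $\mathcal{A}_n^k$ is the set of them. The positive reduction of an integer word replaces every occurrence of its $i$-th smallest positive letter by $i$ (negative letters unchanged). The derangement form $\mathrm{df}_k(\mathfrak{a})$ is obtained from $\pi(1)\cdots\pi(n)$ by replacing $\pi(i)$ with $\phi(i)$ for each $i\in\mathrm{FIX}(\pi)$ and then applying positive reduction; the permutation form $\mathrm{pf}_k(\mathfrak{a})$ is obtained likewise, replacing only for $i\in\mathrm{FIX}(\pi)$ with $\phi(i)\ne-k$. For an integer word $w=w_1\cdots w_n$,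 $\mathrm{des}(w)=|\{i\in[n-1]:w_i>w_{i+1}\}|$; $\mathrm{des}(\mathfrak{a})=\mathrm{des}(\mathrm{pf}_k(\mathfrak{a}))$ and $\mathrm{dez}(\mathfrak{a})=\mathrm{des}(\mathrm{df}_k(\mathfrak{a}))$. The weak derangement part $\mathrm{Der}_k(\mathfrak{a})$ is the word obtained from $\mathrm{df}_k(\mathfrak{a})$ by deleting all letters $-k$; say it is $w=w_1\cdots w_m$. It is the derangement form of a unique $k$-arrangement $(\sigma,\phi')$ of $[m]$ with $\phi'$ never taking the value $-k$; its excedance word is $\mathbf{e}(w)=e_1\cdots e_m$ where $e_j=E$ if $\sigma(j)>j$ and $e_j=N$ if $\sigma(j)\le j$. (Equivalently, if $w_j$ comes from the letter at position $i_j$ of $\pi$, then $e_j=E$ iff $\pi(i_j)>i_j$.) Write $\mathrm{df}_k(\mathfrak{a})=S_0w_1S_1w_2\cdots S_{m-1}w_mS_m$, where each slot $S_i$ ($0\le i\le m$) is a possibly empty block of letters $-k$. Set $w_0=w_{m+1}=+\infty$ and $e_0=e_{m+1}=E$. The slot $S_i$ is of type I if $w_i>w_{i+1}$ and $(e_i,e_{i+1})=(E,N)$; type II if $w_i\le w_{i+1}$ and $(e_i,e_{i+1})=(N,E)$; type III if $w_i\le w_{i+1}$ and $(e_i,e_{i+1})\ne(N,E)$; type IV if $w_i>w_{i+1}$ and $(e_i,e_{i+1})\ne(E,N)$. $t_j(\mathfrak{a})$ is the number of slots (empty or not) of type $j$ ($j=1,2,3,4$ for I, II, III, IV), and $t_j^+(\mathfrak{a})$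 the number of nonempty slots of type $j$. *)

From mathcomp Require Import all_boot all_order all_algebra all_fingroup.
Set Implicit Arguments. Unset Strict Implicit. Unset Printing Implicit Defensive.
Import Order.TTheory GRing.Theory Num.Theory.
Local Open Scope ring_scope.

(* A k-arrangement of [n] is encoded by (pi, phi) with pi : 'S_n a
   permutation of 'I_n = {0,..,n-1} (position/value i stands for i+1), and
   phi : {ffun 'I_n -> 'I_k}; only the restriction of phi to FIX(pi) is
   used.  The value j : 'I_k stands for the negative letter -(j+1), so
   the letter -k corresponds to val j = k.-1. *)

Definition negletter (k : nat) (j : 'I_k) : int := - ((val j).+1)%:Z.

Definition posred (w : seq int) : seq int :=
  [seq (if 0 < x then (size (undup [seq y <- w | (0 < y) && (y <= x)]))%:Z
        else x) | x <- w].

Definition des (w : seq int) : nat :=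
  count (fun p : int * int => p.2 < p.1) (zip w (behead w)).

Definition df (n k : nat) (pi : 'S_n) (phi : {ffun 'I_n -> 'I_k}) : seq int :=
  posred [seq (if pi i == i then negletter (phi i)
               else ((val (pi i)).+1)%:Z) | i <- enum 'I_n].

Definition pf (n k : nat) (pi : 'S_n) (phi : {ffun 'I_n -> 'I_k}) : seq int :=
  posred [seq (if (pi i == i) && (val (phi i) != k.-1) then negletter (phi i)
               else ((val (pi i)).+1)%:Z) | i <- enum 'I_n].

Definition des_arr n k (pi : 'S_n) (phi : {ffun 'I_n -> 'I_k}) : nat :=
  des (pf pi phi).
Definition dez_arr n k (pi : 'S_n) (phi : {ffun 'I_n -> 'I_k}) : nat :=
  des (df pi phi).

Definition Der n k (pi : 'S_n) (phi : {ffun 'I_n -> 'I_k}) : seq int :=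
  [seq x <- df pi phi | x != - (k%:Z)].

Definition der_pos n k (pi : 'S_n) (phi : {ffun 'I_n -> 'I_k}) : seq 'I_n :=
  [seq i <- enum 'I_n | ~~ ((pi i == i) && (val (phi i) == k.-1))].

(* excedance word of Der: true = E, false = N  (e_j = E iff pi(i_j) > i_j) *)
Definition exc_word n k (pi : 'S_n) (phi : {ffun 'I_n -> 'I_k}) : seq bool :=
  [seq (val i < val (pi i))%N | i <- der_pos pi phi].

(* sizes of the slots S_0, ..., S_m of a word, where c is the letter -k *)
Fixpoint slot_sizes (c : int) (s : seq int) : seq nat :=
  match s with
  | [::] => [:: 0%N]
  | x :: s' => let r := slot_sizes c s' in
               if x == c then (head 0%N r).+1 :: behead r else 0%N :: r
  end.

(* w_i with sentinels w_0 = w_{m+1} = +oo (None) *)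
Definition wx (w : seq int) (i : nat) : option int :=
  if (i == 0%N) || (size w < i)%N then None else Some (nth 0 w i.-1).
(* e_i with sentinels e_0 = e_{m+1} = E (true) *)
Definition ex (e : seq bool) (i : nat) : bool :=
  if (i == 0%N) || (size e < i)%N then true else nth true e i.-1.
Definition gtx (a b : option int) : bool :=
  match a, b with
  | None, None => false
  | None, Some _ => true
  | Some _, None => false
  | Some x, Some y => y < x
  end.

(* type of slot S_i: 1 = I, 2 = II, 3 = III, 4 = IV *)
Definition slot_type (w : seq int) (e : seq bool) (i : nat) : nat :=
  let a := ex e i in let b := ex e i.+1 in
  if gtx (wx w i) (wx w i.+1) then (if a && ~~ b then 1%N else 4%N)
  else (if ~~ a && b then 2%N else 3%N).

Definition arr_slot_type n k (pi : 'S_n) (phi : {ffun 'I_n -> 'I_k}) (i : nat)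
  : nat := slot_type (Der pi phi) (exc_word pi phi) i.

Definition slot_idx n k (pi : 'S_n) (phi : {ffun 'I_n -> 'I_k}) : seq nat :=
  iota 0 (size (Der pi phi)).+1.

Definition tcount n k (pi : 'S_n) (phi : {ffun 'I_n -> 'I_k}) (j : nat) : nat :=
  count (fun i => arr_slot_type pi phi i == j) (slot_idx pi phi).

Definition tplus n k (pi : 'S_n) (phi : {ffun 'I_n -> 'I_k}) (j : nat) : nat :=
  count (fun i => (arr_slot_type pi phi i == j) &&
                  (0 < nth 0 (slot_sizes (- (k%:Z)) (df pi phi)) i)%N)
        (slot_idx pi phi).

Definition typeI_II_seq n k (pi : 'S_n) (phi : {ffun 'I_n -> 'I_k}) : seq nat :=
  [seq arr_slot_type pi phi i | i <- slot_idx pi phi &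
     arr_slot_type pi phi i \in [:: 1%N; 2%N]].

From mathcomp Require Import all_boot all_order all_algebra all_fingroup.
From mathcomp Require Import zify.
Set Implicit Arguments. Unset Strict Implicit. Unset Printing Implicit Defensive.
Import Order.TTheory GRing.Theory Num.Theory.

(* Positive reduction preserves all comparisons, so both identities can be read on
   the unreduced words, where the letters -k lie below all other letters.  In the
   derangement form a nonempty slot S_i contributes the descent w_i > -k instead of
   the comparison w_i > w_(i+1), i.e. one extra descent exactly for types II and III.
   In the permutation form a nonempty S_i is a run of consecutive fixed points, read
   as increasing positions, and contributes [e_i = E] + [e_(i+1) = N] descents
   instead.  Only fixed points lie between the positions of w_i and w_(i+1), which
   forces an (E,N) pair to be a descent and an (N,E) pair an ascent; so the extra
   descents come from types I and III, and the slots of types I and II are exactly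
   the switches E -> N and N -> E of the word E e_1 ... e_m E, which alternate. *)

Lemma des_cons a b u : des [:: a, b & u] = ((b < a)%R + des (b :: u))%N.
Proof. by []. Qed.

Lemma des_map_cons T (f : T -> int) x y s :
  des (map f [:: x, y & s]) = ((f y < f x)%R + des (map f (y :: s)))%N.
Proof. by []. Qed.

Lemma count_zip_nth S T (x0 : S) (y0 : T) (a : pred (S * T)) s t :
  size s = size t ->
  count a (zip s t) = count (fun i => a (nth x0 s i, nth y0 t i)) (iota 0 (size s)).
Proof.
move=> st; have zs : size (zip s t) = size s by rewrite size1_zip ?st.
rewrite -[zip s t](take_size) -zs -(map_nth_iota0 (x0, y0)) // count_map zs.
by apply: eq_count => i /=; rewrite nth_zip.
Qed.

Lemma size_slot_sizes c u :
  size (slot_sizes c u) = (size [seq x <- u | x != c]).+1.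
Proof.
by elim: u => //= x u IH; case: eqP => _ /=; rewrite ?size_behead IH.
Qed.

Lemma head_filter T (x0 : T) (P : pred T) s :
  head x0 [seq x <- s | P x] = nth x0 s (find P s).
Proof. by elim: s => //= x s IH; case: (P x). Qed.

Lemma sorted_filter_gap T (x0 : T) (P : pred T) (r : rel T) s :
  (forall i j, (i < j < size s)%N -> P (nth x0 s i) -> P (nth x0 s j) ->
     (forall l, (i < l < j)%N -> ~~ P (nth x0 s l)) ->
     r (nth x0 s i) (nth x0 s j)) ->
  sorted r [seq x <- s | P x].
Proof.
elim: s => //= x s IH gap.
have sorted_s : sorted r [seq x <- s | P x].
  apply: IH => i j /andP[ij js] Pi Pj between.
  apply: (gap i.+1 j.+1) => //; first by rewrite ltnS ij.
  by case=> // l /andP[il lj]; apply: between; rewrite il.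
case: ifP => Px //; case E: [seq y <- s | P y] sorted_s => [//|y t] /= ->.
have hasP : has P s by rewrite has_count -size_filter E.
have -> : y = nth x0 s (find P s) by rewrite -head_filter E.
rewrite andbT; apply: (gap 0 (find P s).+1) => //=; first by rewrite ltnS -has_find.
  exact: nth_find.
by case=> // l; rewrite ltnS => /andP[_ /(before_find x0) ->].
Qed.

Lemma ex_nth e i : ex e i = nth true (true :: e) i.
Proof.
rewrite /ex; case: i => //= i; case: ltnP => //= le_e_i.
by rewrite nth_default.
Qed.

Lemma ex_rcons e i : ex e i.+1 = nth true (rcons e true) i.
Proof.
rewrite ex_nth /= nth_rcons; case: ltnP => // le_e_i.
by rewrite nth_default // if_same.
Qed.

Definition slot_types (w : seq int) (e : seq bool) : seq nat :=
  [seq slot_type w e i | i <- iota 0 (size w).+1].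

Lemma count_slot_types (w : seq int) (e : seq bool) (sz : seq nat) (P : nat -> nat -> bool) :
  size sz = (size w).+1 ->
  count (fun i => P (slot_type w e i) (nth 0 sz i)) (iota 0 (size w).+1) =
  count (fun t => P t.1 t.2) (zip (slot_types w e) sz).
Proof.
move=> size_sz; rewrite (count_zip_nth 0 0) ?size_map ?size_iota //.
apply: eq_in_count => i; rewrite mem_iota => lt_i.
by rewrite (nth_map 0) ?size_iota // nth_iota.
Qed.

Lemma slot_type_cons0 a w b e : slot_type (a :: w) (b :: e) 0 = if b then 4 else 1.
Proof. by rewrite /slot_type /wx /ex /=; case: b. Qed.

Lemma slot_type_cons1 a a' w b b' e :
  slot_type (a :: a' :: w) (b :: b' :: e) 1 =
  if (a' < a)%R then (if b && ~~ b' then 1 else 4)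
  else (if ~~ b && b' then 2 else 3).
Proof. by []. Qed.

Lemma slot_type_last a b : slot_type [:: a] [:: b] 1 = if b then 3 else 2.
Proof. by rewrite /slot_type /wx /ex /=; case: b. Qed.

Lemma slot_types_cons a w b e :
  slot_types (a :: w) (b :: e) =
  [:: if b then 4 else 1, slot_type (a :: w) (b :: e) 1 & behead (slot_types w e)].
Proof.
rewrite /slot_types /= slot_type_cons0 -[2]/(1 + 1)%N iotaDl -map_comp.
by do 2 congr cons; apply/eq_in_map => -[|i]; rewrite ?mem_iota.
Qed.

Definition flip_types (b : bool) (e : seq bool) : seq nat :=
  [seq (if f.1 then 1 else 2) | f <- zip (b :: e) (rcons e true) & f.1 != f.2].

Lemma flip_types_cons b x e : flip_types b (x :: e) =
  (if b != x then [:: if b then 1 else 2] else [::]) ++ flip_types x e.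
Proof. by rewrite {1}/flip_types /=; case: ifP. Qed.

Lemma flip_types_alternate b e : exists h,
  flip_types b e = (if b then [::] else [:: 2]) ++ flatten (nseq h [:: 1; 2]).
Proof.
elim: e b => [|x e IH] b; first by exists 0; case: b.
have [h flipE] := IH x; rewrite flip_types_cons flipE {flipE IH}.
by case: b; case: x; [exists h | exists h.+1 | exists h | exists h].
Qed.

Lemma count_alternating h j : j \in [:: 1; 2] ->
  count (pred1 j) (flatten (nseq h [:: 1; 2])) = h.
Proof. by rewrite !inE => /orP[]/eqP->; elim: h => //= h ->. Qed.

Lemma nth_alternating h j : (j < size (flatten (nseq h [:: 1; 2])))%N ->
  nth 0 (flatten (nseq h [:: 1; 2])) j = if odd j then 2 else 1.
Proof. by elim: h j => // h IH [|[|j]] //= lt_j; rewrite IH //; case: (odd j). Qed.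

Lemma zip_ex e :
  zip (true :: e) (rcons e true) = [seq (ex e i, ex e i.+1) | i <- iota 0 (size e).+1].
Proof.
have size_e : size (true :: e) = size (rcons e true) by rewrite size_rcons.
apply: (@eq_from_nth _ (true, true)) => [|i].
  by rewrite size1_zip ?size_e // size_map size_iota.
rewrite size1_zip ?size_e // size_rcons => lt_i_e.
by rewrite nth_zip // (nth_map 0) ?size_iota // nth_iota // ex_nth ex_rcons.
Qed.

Definition exc_consistent (w : seq int) (e : seq bool) := forall i,
  ((ex e i && ~~ ex e i.+1) ==> gtx (wx w i) (wx w i.+1)) &&
  ((~~ ex e i && ex e i.+1) ==> ~~ gtx (wx w i) (wx w i.+1)).

Lemma slot_types_I_II w e : exc_consistent w e -> size w = size e ->
  [seq t <- slot_types w e | t \in [:: 1; 2]] = flip_types true e.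
Proof.
move=> cons_we size_we; rewrite /flip_types zip_ex /slot_types !filter_map -map_comp -size_we.
have flipE i : (slot_type w e i \in [:: 1; 2]) = (ex e i != ex e i.+1) /\
    (ex e i != ex e i.+1 -> slot_type w e i = if ex e i then 1 else 2).
  have := cons_we i; rewrite /slot_type.
  by case: (ex e i) (ex e i.+1) (gtx _ _) => [] [] [].
rewrite (eq_filter (fun i => (flipE i).1)); apply/eq_in_map => i.
by rewrite mem_filter => /andP[/(flipE i).2].
Qed.

(* [s] lists the positions of an arrangement; [d] and [p] give their letters in
   the derangement and permutation forms before positive reduction, [K] marks
   the positions of the letters -k (which all equal [c]), [e] the excedances. *)
Section Slots.
Variables (T : Type) (d p : T -> int) (K e : T -> bool) (c : int).
Hypothesis d_deleted : forall x, K x -> d x = c.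
Hypothesis d_kept : forall x, ~~ K x -> (c < d x)%R.
Hypothesis p_kept : forall x, ~~ K x -> p x = d x.

Definition kept s := [seq x <- s | ~~ K x].
Definition der s := map d (kept s).
Definition exc s := map e (kept s).
Definition sizes s := slot_sizes c (map d s).
Definition slots s := zip (slot_types (der s) (exc s)) (sizes s).
Definition nonempty_slots j s :=
  count (fun t : nat * nat => (t.1 == j) && (0 < t.2)%N) (slots s).

Definition adj_compat x y := [&& (K x && K y) ==> (p x <= p y)%R,
  (~~ K x && K y) ==> ((p y < d x)%R == e x) &
  (K x && ~~ K y) ==> ((d y < p x)%R == ~~ e y)].

Definition exc_compat x y :=
  (e x && ~~ e y ==> (d y < d x)%R) && (~~ e x && e y ==> (d x < d y)%R).

Lemma exc_consistent_kept s :
  sorted exc_compat (kept s) -> exc_consistent (der s) (exc s).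
Proof.
move=> sorted_s [|i]; rewrite /wx /ex /der /exc !size_map /=.
  by case: ifP => _; rewrite ?implybT.
case: (ltnP (size (kept s)) i.+1) => [lt_s_i | le_i_s]; first by rewrite (leqW lt_s_i).
case: (ltnP (size (kept s)) i.+2) => [_ | lt_i_s]; first by rewrite andbF implybT.
case E: (kept s) sorted_s lt_i_s => [//|x0 r] sorted_s lt_i_s; rewrite -E in sorted_s lt_i_s *.
have /andP[desc asc] := (sortedP x0 sorted_s) i lt_i_s.
rewrite !(nth_map x0) //= desc; apply/implyP => /(implyP asc).
by rewrite -leNgt => /ltW.
Qed.

Lemma kept_cons_deleted x s : K x -> kept (x :: s) = kept s.
Proof. by rewrite /kept /= => ->. Qed.

Lemma kept_cons_kept x s : ~~ K x -> kept (x :: s) = x :: kept s.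
Proof. by rewrite /kept /= => ->. Qed.

Lemma der_cons_kept x s : ~~ K x -> der (x :: s) = d x :: der s.
Proof. by move=> Kx; rewrite /der kept_cons_kept. Qed.

Lemma exc_cons_kept x s : ~~ K x -> exc (x :: s) = e x :: exc s.
Proof. by move=> Kx; rewrite /exc kept_cons_kept. Qed.


Lemma sizes_cons_deleted x s : K x ->
  sizes (x :: s) = (head 0 (sizes s)).+1 :: behead (sizes s).
Proof. by move=> Kx; rewrite /sizes /= d_deleted // eqxx. Qed.

Lemma sizes_cons_kept x s : ~~ K x -> sizes (x :: s) = 0 :: sizes s.
Proof. by move=> Kx; rewrite /sizes /= gt_eqF ?d_kept. Qed.

Lemma sizesE s : sizes s = head 0 (sizes s) :: behead (sizes s).
Proof. by rewrite /sizes; case: (map d s) => //= x u; case: ifP. Qed.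

Lemma nonempty_slotsE j s : nonempty_slots j s =
  ((slot_type (der s) (exc s) 0 == j) && (0 < head 0 (sizes s))%N)
  + count (fun t : nat * nat => (t.1 == j) && (0 < t.2)%N)
      (zip (behead (slot_types (der s) (exc s))) (behead (sizes s))).
Proof. by rewrite /nonempty_slots /slots sizesE. Qed.

Lemma nonempty_slots_cons_deleted j x s : K x ->
  nonempty_slots j (x :: s) = nonempty_slots j s
    + ((slot_type (der s) (exc s) 0 == j) && (head 0 (sizes s) == 0)).
Proof.
move=> Kx; rewrite !nonempty_slotsE sizes_cons_deleted // /der /exc kept_cons_deleted //=.
by case: (slot_type _ _ 0 == j); case: (head 0 (sizes s)) => /=; lia.
Qed.

Lemma nonempty_slots_cons_kept j x s : ~~ K x ->
  nonempty_slots j (x :: s) + ((slot_type (der s) (exc s) 0 == j) && (0 < head 0 (sizes s))%N)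
  = nonempty_slots j s
    + ((slot_type (der (x :: s)) (exc (x :: s)) 1 == j) && (0 < head 0 (sizes s))%N).
Proof.
move=> Kx; rewrite !nonempty_slotsE sizes_cons_kept // der_cons_kept // exc_cons_kept //.
by rewrite slot_types_cons (sizesE s) /= andbF; lia.
Qed.

Lemma kept_nilP s : kept s = [::] <-> all K s.
Proof.
elim: s => // x s IH; case: (boolP (K x)) => Kx.
  by rewrite kept_cons_deleted //= Kx.
by rewrite kept_cons_kept //= (negbTE Kx).
Qed.

Lemma sizes_all_deleted s : all K s -> sizes s = [:: size s].
Proof.
elim: s => //= x s IH /andP[Kx /IH sizes_s].
by rewrite -/(sizes (x :: s)) sizes_cons_deleted // sizes_s.
Qed.

Lemma des_all_deleted s : all K s -> sorted adj_compat s ->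
  des (map p s) = 0 /\ des (map d s) = 0.
Proof.
elim: s => // x [|y s] IH // /andP[Kx /[dup] all_K /andP[Ky _]] /andP[xy sorted_ys].
have [des_p des_d] := IH all_K sorted_ys.
rewrite !des_map_cons des_p des_d !d_deleted // ltxx.
by move: xy; rewrite /adj_compat Kx Ky /= => /andP[le_xy _]; rewrite ltNge le_xy.
Qed.

Definition des_decomposition s :=
  des (map p s) = (des (der s) + nonempty_slots 1 s + nonempty_slots 3 s)%N /\
  des (map d s) = (des (der s) + nonempty_slots 2 s + nonempty_slots 3 s)%N.

Lemma des_decomposition_cons_deleted x s : K x -> kept s <> [::] ->
  path adj_compat x s -> des_decomposition s -> des_decomposition (x :: s).
Proof.
case: s => [_ /(_ erefl) //|z s] Kx _ /andP[xz _] [des_p des_d].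
rewrite /des_decomposition /der kept_cons_deleted // -/(der _) !des_map_cons des_p des_d.
rewrite !(nonempty_slots_cons_deleted _ _ Kx) (d_deleted Kx).
case: (boolP (K z)) => Kz.
  move: xz; rewrite /adj_compat Kx Kz /= => /andP[le_xz _].
  rewrite sizes_cons_deleted // ltNge le_xz (d_deleted Kz) ltxx.
  by rewrite !andbF !addn0.
move: xz; rewrite /adj_compat Kx (negbTE Kz) /= (p_kept Kz) => /eqP ->.
rewrite (lt_gtF (d_kept Kz)) sizes_cons_kept // der_cons_kept // exc_cons_kept //.
by rewrite slot_type_cons0; case: (e z) => /=; lia.
Qed.

Lemma des_decomposition_single x s : ~~ K x -> all K s ->
  path adj_compat x s -> des_decomposition (x :: s).
Proof.
move=> Kx all_K xs.
have der_x : der (x :: s) = [:: d x] by rewrite der_cons_kept // /der (kept_nilP _).2.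
have exc_x : exc (x :: s) = [:: e x] by rewrite exc_cons_kept // /exc (kept_nilP _).2.
have slots_x j : nonempty_slots j (x :: s) = ((if e x then 3 else 2) == j) && (0 < size s)%N.
  rewrite /nonempty_slots /slots der_x exc_x sizes_cons_kept // sizes_all_deleted //.
  by rewrite slot_types_cons slot_type_last /= andbF addn0.
rewrite /des_decomposition der_x !slots_x.
case: s all_K xs {slots_x der_x exc_x} => [|z s]; first by rewrite !andbF.
move=> /[dup] all_K /andP[Kz _] /andP[xz sorted_zs].
have [des_p des_d] := des_all_deleted all_K sorted_zs.
move: xz; rewrite /adj_compat (negbTE Kx) Kz /= andbT => /eqP.
rewrite !des_map_cons des_p des_d (p_kept Kx) (d_deleted Kz) d_kept // => ->.
by case: (e x).
Qed.

Lemma des_decomposition_cons_kept x s : ~~ K x -> kept s <> [::] ->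
  path adj_compat x s -> path exc_compat x (kept s) ->
  des_decomposition s -> des_decomposition (x :: s).
Proof.
move=> Kx; case E: (kept s) => [//|y r] _ xs /andP[xy _] [des_p des_d].
have der_s : der s = d y :: map d r by rewrite /der E.
have exc_s : exc s = e y :: map e r by rewrite /exc E.
have [des_px des_dx] : let a0 := head 0 (sizes s) in
    des (map p (x :: s)) = ((if 0 < a0 then e x else (d y < d x)%R) + des (map p s))%N /\
    des (map d (x :: s)) = ((if 0 < a0 then true else (d y < d x)%R) + des (map d s))%N.
  case: s E xs {des_p des_d der_s exc_s} => [//|z s] E /andP[xz _].
  rewrite /= !des_map_cons (p_kept Kx); case: (boolP (K z)) => Kz.
    move: xz; rewrite /adj_compat (negbTE Kx) Kz /= andbT => /eqP ->.
    by rewrite sizes_cons_deleted // (d_deleted Kz) (d_kept Kx).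
  move: E; rewrite kept_cons_kept // => -[<- _].
  by rewrite sizes_cons_kept // [in (p z < _)%R](p_kept Kz).
set a0 := head 0 (sizes s) in des_px des_dx.
have slots_x j := nonempty_slots_cons_kept j s Kx.
rewrite -/a0 der_cons_kept // exc_cons_kept // der_s exc_s in slots_x.
rewrite slot_type_cons0 slot_type_cons1 in slots_x.
rewrite /des_decomposition des_px des_dx der_cons_kept // der_s des_cons -der_s des_p des_d.
have := slots_x 1; have := slots_x 2; have := slots_x 3; move: xy; rewrite /exc_compat.
case: (e x); case: (e y); case: (ltgtP (d y) (d x)); case: (0 < a0)%N => //=; lia.
Qed.

Lemma des_decomposition_holds s : kept s <> [::] ->
  sorted adj_compat s -> sorted exc_compat (kept s) -> des_decomposition s.
Proof.
elim: s => [//|x s IH] kept_xs sorted_xs sorted_kept.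
have sorted_s := path_sorted sorted_xs.
case: (boolP (K x)) => Kx.
  rewrite kept_cons_deleted // in kept_xs sorted_kept.
  by apply: des_decomposition_cons_deleted => //; apply: IH.
rewrite kept_cons_kept // in sorted_kept.
case E: (kept s) => [|y r].
  by apply: des_decomposition_single => //; apply/kept_nilP.
apply: des_decomposition_cons_kept => //; first by rewrite E.
by apply: IH => //; [rewrite E | exact: path_sorted sorted_kept].
Qed.

End Slots.

Definition posrank (w : seq int) (x : int) : int :=
  if (0 < x)%R then Posz (size (undup [seq y <- w | (0 < y)%R && (y <= x)%R])) else x.

Lemma posredE w : posred w = map (posrank w) w.
Proof. by []. Qed.

Lemma posrank_npos w x : (x <= 0)%R -> posrank w x = x.
Proof. by rewrite /posrank leNgt => /negbTE ->. Qed.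

Lemma posrank_gt0 w x : x \in w -> (0 < x)%R -> (0 < posrank w x)%R.
Proof.
move=> xw x_gt0; rewrite /posrank x_gt0 ltz_nat lt0n size_eq0.
have : x \in undup [seq y <- w | (0 < y)%R && (y <= x)%R].
  by rewrite mem_undup mem_filter x_gt0 lexx xw.
by case: (undup _).
Qed.

Lemma posrank_lt w : {in w &, forall x y, (x < y)%R -> (posrank w x < posrank w y)%R}.
Proof.
move=> x y xw yw lt_xy; case: (ltrP 0 x) => [x_gt0 | x_le0]; last first.
  rewrite (posrank_npos w x_le0); case: (ltrP 0 y) => [y_gt0 | y_le0].
    exact: le_lt_trans x_le0 (posrank_gt0 yw y_gt0).
  by rewrite posrank_npos.
have y_gt0 : (0 < y)%R := lt_trans x_gt0 lt_xy.
rewrite /posrank x_gt0 y_gt0 ltz_nat.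
apply: (@leq_trans (size (y :: undup [seq z <- w | (0 < z)%R && (z <= x)%R]))) => //.
apply: uniq_leq_size => [|z].
  by rewrite /= undup_uniq andbT mem_undup mem_filter negb_and (lt_geF lt_xy) andbF.
rewrite inE !mem_undup !mem_filter => /orP[/eqP ->|/andP[/andP[z_gt0 le_zx] zw]].
  by rewrite y_gt0 lexx yw.
by rewrite z_gt0 zw (le_trans le_zx (ltW lt_xy)).
Qed.

Lemma posrank_mono w : {in w &, {mono posrank w : x y / (x < y)%R}}.
Proof. by move=> x y xw yw; rewrite !ltNge (le_mono_in (@posrank_lt w)). Qed.

Lemma posrank_eq_neg w c : (c < 0)%R -> {in w, forall x, (posrank w x == c) = (x == c)}.
Proof.
move=> c_lt0 x xw; case: (ltrP 0 x) => [x_gt0 | x_le0]; last by rewrite posrank_npos.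
have c_lt_x := lt_trans c_lt0 x_gt0.
by rewrite !gt_eqF // (lt_trans c_lt0 (posrank_gt0 xw x_gt0)).
Qed.

Section MonotoneRelabelling.
Variables (g : int -> int) (u : seq int).
Hypothesis g_mono : {in u &, {mono g : x y / (x < y)%R}}.

Lemma des_map_mono : des (map g u) = des u.
Proof.
elim: u g_mono => // a [|b v] IH mono_ab //; rewrite des_map_cons des_cons.
rewrite mono_ab ?inE ?eqxx ?orbT // IH // => x y xv yv.
by apply: mono_ab; rewrite inE ?xv ?yv orbT.
Qed.

Lemma wx_map i : wx (map g u) i = omap g (wx u i).
Proof.
rewrite /wx size_map; case: ifP => // /negbT; rewrite negb_or -ltnNge.
by case: i => //= i lt_i_u; rewrite (nth_map 0%R).
Qed.

Lemma wx_mem i : if wx u i is Some a then a \in u else true.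
Proof.
rewrite /wx; case: ifP => // /negbT; rewrite negb_or -ltnNge.
by case: i => //= i lt_i_u; rewrite mem_nth.
Qed.

Lemma slot_type_map_mono e i : slot_type (map g u) e i = slot_type u e i.
Proof.
rewrite /slot_type !wx_map; have := wx_mem i; have := wx_mem i.+1.
by case: (wx u i) => [a|]; case: (wx u i.+1) => [b|] //= bu au; rewrite g_mono.
Qed.

Lemma slot_types_map_mono e : slot_types (map g u) e = slot_types u e.
Proof. by rewrite /slot_types size_map; apply/eq_map => i; rewrite slot_type_map_mono. Qed.

End MonotoneRelabelling.

Lemma slot_sizes_map (g : int -> int) c u : {in u, forall x, (g x == c) = (x == c)} ->
  slot_sizes c (map g u) = slot_sizes c u.
Proof.
elim: u => //= a u IH g_c; rewrite g_c ?mem_head // IH // => x xu.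
by apply: g_c; rewrite inE xu orbT.
Qed.

Section Arrangement.
Variables (n k : nat) (pi : 'S_n) (phi : {ffun 'I_n -> 'I_k}).
Hypothesis k_gt0 : (0 < k)%N.

Definition df_letter (i : 'I_n) : int :=
  if pi i == i then negletter (phi i) else Posz (val (pi i)).+1.
Definition pf_letter (i : 'I_n) : int :=
  if (pi i == i) && (val (phi i) != k.-1) then negletter (phi i)
  else Posz (val (pi i)).+1.
Definition minus_k (i : 'I_n) := (pi i == i) && (val (phi i) == k.-1).
Definition excedance (i : 'I_n) := (val i < val (pi i))%N.

Lemma df_letter_minus_k i : minus_k i -> df_letter i = (- Posz k)%R.
Proof.
case/andP => /eqP fix_i /eqP phi_i.
by rewrite /df_letter fix_i eqxx /negletter phi_i prednK.
Qed.

Lemma df_letter_kept i : ~~ minus_k i -> (- Posz k < df_letter i)%R.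
Proof.
rewrite /minus_k /df_letter /negletter; have : (val (phi i) < k)%N := ltn_ord (phi i).
by case: (pi i == i) => /= lt_phi_k ne_phi_k; lia.
Qed.

Lemma pf_letter_kept i : ~~ minus_k i -> pf_letter i = df_letter i.
Proof. by rewrite /minus_k /pf_letter /df_letter; case: (pi i == i) => //= ->. Qed.

Lemma perm_fixed_image (a l : 'I_n) : pi l = l -> a != l -> val (pi a) != val l.
Proof.
move=> fix_l; apply: contraNneq => /val_inj pa_l; apply/eqP.
by apply: (@perm_inj _ pi); rewrite pa_l fix_l.
Qed.

Lemma adj_compat_succ (a b : 'I_n) : b = a.+1 :> nat ->
  adj_compat df_letter pf_letter minus_k excedance a b.
Proof.
move=> /= b_succ; have ne_ab : a != b by apply/eqP => ab; move: b_succ; rewrite ab; lia.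
have img_b : (pi b != b) || (val (pi a) != val b).
  by case: (pi b =P b) => //= /perm_fixed_image; apply.
have img_a : (pi a != a) || (val (pi b) != val a).
  by case: (pi a =P a) => //= /perm_fixed_image; apply; rewrite eq_sym.
move: img_a img_b; rewrite /adj_compat /minus_k /df_letter /pf_letter /excedance /negletter.
rewrite -!val_eqE.
have : (val (phi a) < k)%N := ltn_ord (phi a); have : (val (phi b) < k)%N := ltn_ord (phi b).
case: (val (pi a) =P val a) => [-> | /eqP]; case: (val (pi b) =P val b) => [-> | /eqP];
  case: (val (phi a) =P k.-1); case: (val (phi b) =P k.-1) => /=; lia.
Qed.

Lemma fixed_gap (x : 'I_n) (lo hi : nat) :
  (forall l : 'I_n, (lo < l < hi)%N -> pi l = l) ->
  (pi x == x) || ~~ (lo < pi x < hi)%N.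
Proof.
move=> fixed; case: (boolP (lo < pi x < hi)%N) => [/fixed fix_px|]; last by rewrite orbT.
by apply/orP; left; apply/eqP/(@perm_inj _ pi).
Qed.

Lemma exc_compat_gap (a b : 'I_n) : (a < b)%N ->
  (forall l : 'I_n, (a < l < b)%N -> pi l = l) ->
  exc_compat df_letter excedance a b.
Proof.
move=> /= lt_ab fixed; have := fixed_gap a fixed; have := fixed_gap b fixed.
rewrite /exc_compat /df_letter /excedance /negletter -!val_eqE /=.
by case: (val (pi a) =P val a) => [-> | /eqP];
  case: (val (pi b) =P val b) => [-> | /eqP] /=; lia.
Qed.

Lemma sorted_adj_compat (x0 : 'I_n) :
  sorted (adj_compat df_letter pf_letter minus_k excedance) (enum 'I_n).
Proof.
apply/(sortedP x0) => i; rewrite size_enum_ord => lt_i_n.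
by apply: adj_compat_succ; rewrite !nth_enum_ord // ltnW.
Qed.

Lemma sorted_exc_compat (x0 : 'I_n) :
  sorted (exc_compat df_letter excedance) (kept minus_k (enum 'I_n)).
Proof.
apply: (@sorted_filter_gap _ x0 (fun i => ~~ minus_k i)) => i j.
rewrite size_enum_ord => /andP[lt_ij lt_j_n] _ _ between.
have lt_i_n := ltn_trans lt_ij lt_j_n.
apply: exc_compat_gap => [|l]; rewrite !nth_enum_ord // => between_l.
by have := between l; rewrite nth_ord_enum negbK => /(_ between_l) /andP[/eqP].
Qed.

Local Notation D := (map df_letter (enum 'I_n)).
Local Notation der_raw := (der df_letter minus_k (enum 'I_n)).
Local Notation exc_raw := (exc minus_k excedance (enum 'I_n)).

Lemma minus_k_df_letter i : (df_letter i == - Posz k)%R = minus_k i.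
Proof.
case: (boolP (minus_k i)) => [/df_letter_minus_k -> | /df_letter_kept/gt_eqF //].
by rewrite eqxx.
Qed.

Lemma Der_posrank : Der pi phi = map (posrank D) der_raw.
Proof.
have filter_D : [seq x <- D | x != (- Posz k)%R] = der_raw.
  rewrite /der /kept filter_map; congr map.
  by apply: eq_filter => i /=; rewrite minus_k_df_letter.
rewrite /Der /df posredE filter_map -filter_D; congr map.
by apply: eq_in_filter => x xD /=; rewrite posrank_eq_neg //; lia.
Qed.

Lemma slot_sizes_df :
  slot_sizes (- Posz k)%R (df pi phi) = sizes df_letter (- Posz k)%R (enum 'I_n).
Proof. by rewrite /df posredE slot_sizes_map // => x xD; rewrite posrank_eq_neg //; lia. Qed.

Lemma posrank_mono_der : {in der_raw &, {mono posrank D : x y / (x < y)%R}}.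
Proof.
have der_D : {subset der_raw <= D} by move=> x /mapP[i _ ->]; rewrite map_f ?mem_enum.
by move=> x y /der_D xD /der_D yD; rewrite posrank_mono.
Qed.

Lemma slot_types_Der : slot_types (Der pi phi) (exc_word pi phi) = slot_types der_raw exc_raw.
Proof. by rewrite Der_posrank slot_types_map_mono //; exact: posrank_mono_der. Qed.

Lemma tplus_nonempty_slots j :
  tplus pi phi j = nonempty_slots df_letter minus_k excedance (- Posz k)%R j (enum 'I_n).
Proof.
rewrite /tplus /arr_slot_type /slot_idx.
rewrite (count_slot_types _ (fun t a => (t == j) && (0 < a)%N)) ?size_slot_sizes //.
by rewrite slot_types_Der slot_sizes_df.
Qed.

Lemma typeI_II_seqE :
  typeI_II_seq pi phi = [seq t <- slot_types (Der pi phi) (exc_word pi phi) | t \in [:: 1; 2]].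
Proof. by rewrite filter_map. Qed.

Lemma tcount_typeI_II j : j \in [:: 1; 2] ->
  tcount pi phi j = count (pred1 j) (typeI_II_seq pi phi).
Proof.
move=> j12; rewrite typeI_II_seqE count_filter /tcount /arr_slot_type /slot_types count_map.
by apply: eq_count => i /=; case: eqP => // ->; rewrite j12.
Qed.

Lemma typeI_II_seq_flip (x0 : 'I_n) : typeI_II_seq pi phi = flip_types true exc_raw.
Proof.
rewrite typeI_II_seqE slot_types_Der slot_types_I_II ?size_map //.
exact/exc_consistent_kept/sorted_exc_compat.
Qed.

Lemma des_Der : des (Der pi phi) = des der_raw.
Proof. by rewrite Der_posrank des_map_mono //; exact: posrank_mono_der. Qed.

Lemma des_arr_raw : des_arr pi phi = des (map pf_letter (enum 'I_n)).
Proof. by rewrite /des_arr /pf posredE des_map_mono //; exact: posrank_mono. Qed.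

Lemma dez_arr_raw : dez_arr pi phi = des D.
Proof. by rewrite /dez_arr /df posredE des_map_mono //; exact: posrank_mono. Qed.

Lemma des_decomposition_arrangement (x0 : 'I_n) : Der pi phi != [::] ->
  des_decomposition df_letter pf_letter minus_k excedance (- Posz k)%R (enum 'I_n).
Proof.
move=> Der_nonempty; apply: des_decomposition_holds.
- exact: df_letter_minus_k.
- exact: df_letter_kept.
- exact: pf_letter_kept.
- by move: Der_nonempty; rewrite Der_posrank /der => /[swap] ->.
- exact: sorted_adj_compat.
- exact: sorted_exc_compat.
Qed.

End Arrangement.

Theorem lemma2p5 (n k : nat) (pi : 'S_n) (phi : {ffun 'I_n -> 'I_k}) :
  (0 < n)%N -> (0 < k)%N -> Der pi phi != [::] ->
  [/\ tcount pi phi 1 = tcount pi phi 2,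
      (forall j, (j < size (typeI_II_seq pi phi))%N ->
         nth 0%N (typeI_II_seq pi phi) j = (if odd j then 2%N else 1%N)),
      des_arr pi phi = (des (Der pi phi) + tplus pi phi 1 + tplus pi phi 3)%N
    & dez_arr pi phi = (des (Der pi phi) + tplus pi phi 2 + tplus pi phi 3)%N].
Proof.
move=> n_gt0 k_gt0 Der_nonempty; pose x0 : 'I_n := Ordinal n_gt0.
have [h alternate] :=
  flip_types_alternate true (exc (minus_k pi phi) (excedance pi) (enum 'I_n)).
have typesE : typeI_II_seq pi phi = flatten (nseq h [:: 1; 2]).
  by rewrite (typeI_II_seq_flip pi phi k_gt0 x0) alternate.
have [des_p des_d] := des_decomposition_arrangement k_gt0 x0 Der_nonempty.
split.
- by rewrite !tcount_typeI_II // typesE !count_alternating.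
- by move=> j; rewrite typesE; apply: nth_alternating.
- by rewrite des_arr_raw des_p des_Der // !(tplus_nonempty_slots pi phi k_gt0).
- by rewrite dez_arr_raw des_d des_Der // !(tplus_nonempty_slots pi phi k_gt0).
Qed.
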